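(* Let $f:\mathbb{R}^n\to\mathbb{R}\cup\{\infty\}$ be a proper lower semicontinuous function with $\bar x\in\operatorname{dom} f$. Consider the assertions: (i) $\bar x$ is a strong local minimizer of $f$; (ii) $\bar x$ is a local minimizer of $f$ and $\partial f$ is strongly metrically subregular at $\bar x$ for $0$; (iii) $0\in\partial_p f(\bar x)$ and $\langle z,w\rangle>0$ for all $w\in\operatorname{dom}D(\partial f)(\bar x|0)\setminus\{0\}$ and all $z\in D(\partial f)(\bar x|0)(w)$. Then (iii) $\Rightarrow$ (ii) $\Rightarrow$ (i).
   Context: Tangent cone: $T_\Omega(\bar u)=\{v\mid \exists t_k\downarrow0,\ v_k\to v,\ \bar u+t_kv_k\in\Omega\}$. Limiting subdifferential $\partial f(\bar x)=\{v\mid (v,-1)\in N_{\operatorname{epi} f}(\bar x,f(\bar x))\}$ where $N$ is the limiting (Mordukhovich) normal cone; proximal subdifferential $\partial_p f(\bar x)=\{v\mid \liminf_{x\to\bar x}\frac{f(x)-f(\bar x)-\langle v,x-\bar x\rangle}{\|x-\bar x\|^2}>-\infty\}$. Graphical derivative: $DF(\bar x|\bar y)(w)=\{z\mid (w,z)\in T_{\operatorname{gph}F}(\bar x,\bar y)\}$, applied to $F=\partial f$; $\operatorname{dom}$ denotes the set where the map is nonempty. A set-valued map $F$ is metrically subregular at $\bar x$ for $\bar y\in F(\bar x)$ if there are $\kappa>0$ and a neighborhood $U$ of $\bar x$ with $d(x;F^{-1}(\bar y))\le\kappa\, d(\bar y;F(x))$ for all $x\in U$; it is strongly metrically subregular if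 in addition $\bar x$ is an isolated point of $F^{-1}(\bar y)$. $\bar x$ is a strong local minimizer of $f$ if there are $\kappa,\gamma>0$ with $f(x)-f(\bar x)\ge\frac\kappa2\|x-\bar x\|^2$ whenever $\|x-\bar x\|\le\gamma$. *)

From Stdlib Require Import Fin Reals Lra Classical ClassicalEpsilon FunctionalExtensionality.
Open Scope R_scope.

Definition vec (n : nat) := Fin.t n -> R.
Definition vzero {n} : vec n := fun _ => 0.
Definition vadd {n} (x y : vec n) : vec n := fun i => x i + y i.
Definition vsub {n} (x y : vec n) : vec n := fun i => x i - y i.
Definition vscale {n} (t : R) (x : vec n) : vec n := fun i => t * x i.

Fixpoint fsum (n : nat) : (Fin.t n -> R) -> R :=
  match n return (Fin.t n -> R) -> R with
  | O => fun _ => 0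
  | S m => fun g => g Fin.F1 + fsum m (fun i => g (Fin.FS i))
  end.

Definition inner {n} (x y : vec n) : R := fsum n (fun i => x i * y i).
Definition norm {n} (x : vec n) : R := sqrt (inner x x).

(** * Extended reals R ∪ {+∞}: None = +∞ *)
Definition ereal := option R.
Definition ele (a b : ereal) : Prop :=
  match a, b with
  | _, None => True
  | None, Some _ => False
  | Some x, Some y => x <= y
  end.
Definition rlt_e (r : R) (v : ereal) : Prop :=
  match v with None => True | Some a => r < a end.
Definition escale (k : R) (a : ereal) : ereal := option_map (Rmult k) a.

Definition dom {n} (f : vec n -> ereal) (x : vec n) : Prop := f x <> None.
Definition proper {n} (f : vec n -> ereal) : Prop := exists x, dom f x.
Definition lsc {n} (f : vec n -> ereal) : Prop :=
  forall x r, rlt_e r (f x) ->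
    exists d, 0 < d /\ forall y, norm (vsub y x) < d -> rlt_e r (f y).

(** Distance from a point to a set, +∞ for the empty set. *)
Definition dist_set {n} (x : vec n) (A : vec n -> Prop) : ereal.
Proof.
  destruct (excluded_middle_informative (exists a, A a)) as [H|H].
  - refine (Some (- proj1_sig (completeness
        (fun r => exists a, A a /\ r = - norm (vsub x a)) _ _))).
    + exists 0. intros r [a [_ ->]].
      pose proof (sqrt_pos (inner (vsub x a) (vsub x a))). unfold norm. lra.
    + destruct H as [a Ha]. exists (- norm (vsub x a)). eauto.
  - exact None.
Defined.

Definition pt (n : nat) := (vec n * R)%type.
Definition psub {n} (u v : pt n) : pt n := (vsub (fst u) (fst v), snd u - snd v).
Definition pinner {n} (u v : pt n) : R := inner (fst u) (fst v) + snd u * snd v.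
Definition pnorm {n} (u : pt n) : R := sqrt (pinner u u).

Definition epi {n} (f : vec n -> ereal) (u : pt n) : Prop :=
  match f (fst u) with Some b => b <= snd u | None => False end.

Definition reg_normal {n} (C : pt n -> Prop) (u v : pt n) : Prop :=
  C u /\ forall eps, 0 < eps -> exists d, 0 < d /\
    forall u', C u' -> pnorm (psub u' u) < d ->
      pinner v (psub u' u) <= eps * pnorm (psub u' u).

Definition lim_normal {n} (C : pt n -> Prop) (u v : pt n) : Prop :=
  C u /\ exists (uk vk : nat -> pt n),
    (forall k, C (uk k)) /\
    Un_cv (fun k => pnorm (psub (uk k) u)) 0 /\
    Un_cv (fun k => pnorm (psub (vk k) v)) 0 /\
    (forall k, reg_normal C (uk k) (vk k)).

Definition subdiff {n} (f : vec n -> ereal) (x v : vec n) : Prop :=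
  match f x with
  | Some a => lim_normal (epi f) (x, a) (v, -1)
  | None => False
  end.

Definition prox_subdiff {n} (f : vec n -> ereal) (xb v : vec n) : Prop :=
  match f xb with
  | Some fb => exists M d, 0 < d /\ forall x, 0 < norm (vsub x xb) < d ->
      match f x with
      | None => True
      | Some fx => M <= (fx - fb - inner v (vsub x xb)) / (norm (vsub x xb))^2
      end
  | None => False
  end.

(** * Set-valued maps F : R^n ⇉ R^n  (F x y  means  y ∈ F(x)) *)
Definition svmap (n : nat) := vec n -> vec n -> Prop.

(** Graphical derivative DF(xb|yb)(w): z such that (w,z) ∈ T_{gph F}(xb,yb) *)
Definition graph_deriv {n} (F : svmap n) (xb yb w z : vec n) : Prop :=
  exists (t : nat -> R) (wk zk : nat -> vec n),
    (forall k, 0 < t k) /\ Un_cv t 0 /\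
    Un_cv (fun k => norm (vsub (wk k) w)) 0 /\
    Un_cv (fun k => norm (vsub (zk k) z)) 0 /\
    (forall k, F (vadd xb (vscale (t k) (wk k))) (vadd yb (vscale (t k) (zk k)))).

Definition graph_deriv_dom {n} (F : svmap n) (xb yb w : vec n) : Prop :=
  exists z, graph_deriv F xb yb w z.

Definition metric_subregular {n} (F : svmap n) (xb yb : vec n) : Prop :=
  F xb yb /\ exists kappa d, 0 < kappa /\ 0 < d /\
    forall x, norm (vsub x xb) < d ->
      ele (dist_set x (fun u => F u yb)) (escale kappa (dist_set yb (F x))).

Definition strong_metric_subregular {n} (F : svmap n) (xb yb : vec n) : Prop :=
  metric_subregular F xb yb /\
  exists e, 0 < e /\ forall x, F x yb -> norm (vsub x xb) < e -> x = xb.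

Definition local_minimizer {n} (f : vec n -> ereal) (xb : vec n) : Prop :=
  exists d, 0 < d /\ forall x, norm (vsub x xb) <= d -> ele (f xb) (f x).

Definition strong_local_minimizer {n} (f : vec n -> ereal) (xb : vec n) : Prop :=
  exists kappa gamma, 0 < kappa /\ 0 < gamma /\
    forall x, norm (vsub x xb) <= gamma ->
      match f x, f xb with
      | None, _ => True
      | Some fx, Some fb => fx - fb >= kappa / 2 * (norm (vsub x xb))^2
      | Some _, None => False
      end.

(** (ii) => (i).  Strong metric subregularity of ∂f at xb for 0 yields a
    growth bound |u - xb| <= κ|v| for v ∈ ∂f(u), u near xb.  If f grew slower
    than quadratically along some x, a proximal point u of f around x (a
    minimizer of f + c/2 |· - x|^2 over a closed ball, which exists by lower
    semicontinuity and compactness) would carry the subgradient c(x - u) and lie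
    much closer to x than to xb, contradicting the growth bound.

    (iii) => (ii).  Positivity of <z, w> on the graphical derivative forbids
    "flat" sequences u_k -> xb with v_k ∈ ∂f(u_k), |v_k| = O(|u_k - xb|) and
    <v_k, u_k - xb> = o(|u_k - xb|^2): after normalising by t_k = |u_k - xb|
    a subsequence converges to a pair (w, z) of the graphical derivative with
    |w| = 1 and <z, w> <= 0.  This yields the growth bound, hence strong
    metric subregularity; and if xb were not a local minimizer, minimizing f
    plus a quartic penalty outside a small ball would produce such a flat
    sequence, using the proximal lower bound furnished by 0 ∈ ∂_p f(xb). *)

From Stdlib Require Import Reals Lra Lia Psatz Classical ClassicalEpsilon FunctionalExtensionality.
Open Scope R_scope.

Lemma fsum_ext n (g h : Fin.t n -> R) : (forall i, g i = h i) -> fsum n g = fsum n h.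
Proof.
  revert g h; induction n; intros g h H; simpl; auto.
  rewrite H, (IHn (fun i => g (Fin.FS i)) (fun i => h (Fin.FS i))); auto.
Qed.

Lemma fsum_add n (g h : Fin.t n -> R) : fsum n (fun i => g i + h i) = fsum n g + fsum n h.
Proof.
  revert g h; induction n; intros g h; simpl; [ring|].
  rewrite (IHn (fun i => g (Fin.FS i)) (fun i => h (Fin.FS i))); ring.
Qed.

Lemma fsum_scal n c (g : Fin.t n -> R) : fsum n (fun i => c * g i) = c * fsum n g.
Proof.
  revert g; induction n; intros g; simpl; [ring|].
  rewrite (IHn (fun i => g (Fin.FS i))); ring.
Qed.

Lemma fsum_0 n : fsum n (fun _ => 0) = 0.
Proof. induction n; simpl; auto. rewrite IHn; ring. Qed.

Lemma fsum_sub n (g h : Fin.t n -> R) : fsum n (fun i => g i - h i) = fsum n g - fsum n h.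
Proof.
  replace (fsum n g - fsum n h) with (fsum n g + (-1) * fsum n h) by ring.
  rewrite <- fsum_scal, <- fsum_add. apply fsum_ext; intros; ring.
Qed.

Lemma fsum_nonneg n (g : Fin.t n -> R) : (forall i, 0 <= g i) -> 0 <= fsum n g.
Proof.
  revert g; induction n; intros g H; simpl; [lra|].
  pose proof (IHn (fun i => g (Fin.FS i)) (fun i => H _)). pose proof (H Fin.F1). lra.
Qed.

Lemma fsum_term n (g : Fin.t n -> R) : (forall i, 0 <= g i) -> forall i, g i <= fsum n g.
Proof.
  revert g; induction n; intros g H i; [inversion i|].
  revert H; apply (Fin.caseS' i); simpl.
  - intros H. pose proof (fsum_nonneg n (fun i => g (Fin.FS i)) (fun i => H _)). lra.
  - intros p H. pose proof (IHn (fun i => g (Fin.FS i)) (fun i => H _) p).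
    pose proof (H Fin.F1). lra.
Qed.

Lemma fsum_cv n (g : nat -> Fin.t n -> R) (l : Fin.t n -> R) :
  (forall i, Un_cv (fun k => g k i) (l i)) -> Un_cv (fun k => fsum n (g k)) (fsum n l).
Proof.
  revert g l; induction n; intros g l H; simpl.
  - intros eps Heps. exists 0%nat. intros. unfold Rdist. rewrite Rminus_diag, Rabs_R0. lra.
  - apply CV_plus; [apply H|].
    apply (IHn (fun k i => g k (Fin.FS i)) (fun i => l (Fin.FS i))). intros i; apply H.
Qed.

Definition ns {n} (x : vec n) : R := inner x x.

Lemma ns_nonneg {n} (x : vec n) : 0 <= ns x.
Proof. apply fsum_nonneg; intros; nra. Qed.

Lemma norm_nonneg {n} (x : vec n) : 0 <= norm x.
Proof. apply sqrt_pos. Qed.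

Lemma norm_sq {n} (x : vec n) : norm x * norm x = ns x.
Proof. apply sqrt_sqrt, ns_nonneg. Qed.

Lemma coord_le {n} (x : vec n) i : Rabs (x i) <= norm x.
Proof.
  pose proof (fsum_term n (fun i => x i * x i) (fun i => ltac:(nra)) i).
  pose proof (norm_sq x). pose proof (norm_nonneg x). unfold ns, inner in *.
  apply Rabs_le. nra.
Qed.

Lemma Rabs_le_inv a b : Rabs a <= b -> -b <= a <= b.
Proof. unfold Rabs; destruct (Rcase_abs a); intros; lra. Qed.

Lemma norm_zero_eq {n} (x y : vec n) : norm (vsub x y) = 0 -> x = y.
Proof.
  intros H. apply functional_extensionality; intros i.
  pose proof (coord_le (vsub x y) i) as Hi. rewrite H in Hi. unfold vsub in Hi.
  apply Rabs_le_inv in Hi. lra.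
Qed.

Lemma norm_self {n} (x : vec n) : norm (vsub x x) = 0.
Proof.
  unfold norm, inner, vsub. rewrite <- sqrt_0. f_equal.
  rewrite (fsum_ext n _ (fun _ => 0)) by (intros; ring). apply fsum_0.
Qed.

Lemma norm_vzero_sub {n} (v : vec n) : norm (vsub vzero v) = norm v.
Proof. unfold norm, inner, vsub, vzero. f_equal. apply fsum_ext; intros; ring. Qed.

Lemma norm_sym {n} (x y : vec n) : norm (vsub x y) = norm (vsub y x).
Proof. unfold norm, inner, vsub. f_equal. apply fsum_ext; intros; ring. Qed.

Lemma norm_scal_pos n c (w : vec n) : 0 <= c -> norm (vscale c w) = c * norm w.
Proof.
  intros Hc. unfold norm. replace (inner (vscale c w) (vscale c w)) with (c * c * ns w).
  - rewrite sqrt_mult_alt by nra. rewrite sqrt_square by lra. reflexivity.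
  - unfold ns, inner, vscale. rewrite <- fsum_scal. apply fsum_ext; intros; ring.
Qed.

Lemma inner_comm n (x y : vec n) : inner x y = inner y x.
Proof. unfold inner. apply fsum_ext; intros; ring. Qed.

Lemma inner_scal_l n a (w h : vec n) : inner (vscale a w) h = a * inner w h.
Proof. unfold inner, vscale. rewrite <- fsum_scal. apply fsum_ext; intros; ring. Qed.

Lemma inner_vzero_l n (h : vec n) : inner vzero h = 0.
Proof. unfold inner, vzero. rewrite (fsum_ext n _ (fun _ => 0)) by (intros; ring). apply fsum_0. Qed.

Lemma norm_vzero n : norm (@vzero n) = 0.
Proof. unfold norm. rewrite inner_vzero_l. apply sqrt_0. Qed.

Lemma inner_sub_swap n (x u h : vec n) : inner (vsub x u) h = - inner (vsub u x) h.
Proof.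
  replace (- inner (vsub u x) h) with ((-1) * inner (vsub u x) h) by ring.
  unfold inner, vsub. rewrite <- fsum_scal. apply fsum_ext; intros; ring.
Qed.

Lemma ns_three n (y x u : vec n) :
  ns (vsub y x) = ns (vsub u x) + 2 * inner (vsub u x) (vsub y u) + ns (vsub y u).
Proof.
  unfold ns, inner. rewrite <- fsum_scal, <- !fsum_add.
  apply fsum_ext; intros; unfold vsub; ring.
Qed.

Lemma cauchy_schwarz_sq {n} (x y : vec n) : inner x y * inner x y <= ns x * ns y.
Proof.
  destruct (Req_dec (ns y) 0) as [H0|H0].
  - assert (Hy : forall i, y i = 0).
    { intros i. pose proof (fsum_term n (fun i => y i * y i) (fun i => ltac:(nra)) i).
      unfold ns, inner in H0. nra. }
    replace (inner x y) with 0.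
    + rewrite H0. lra.
    + unfold inner. rewrite <- (fsum_0 n). apply fsum_ext; intros; rewrite Hy; ring.
  - (* 0 <= |x - t y|^2 with t = <x,y>/|y|^2 *)
    pose proof (ns_nonneg y). set (t := inner x y / ns y).
    assert (Hexp : ns (fun i => x i - t * y i) = ns x - 2 * t * inner x y + t * t * ns y).
    { unfold ns, inner. rewrite <- !fsum_scal, <- fsum_sub, <- fsum_add.
      apply fsum_ext; intros; ring. }
    pose proof (ns_nonneg (fun i => x i - t * y i)) as Hq. rewrite Hexp in Hq.
    assert (Hp : 0 < ns y) by lra.
    assert (0 <= (ns x - 2 * t * inner x y + t * t * ns y) * ns y) by nra.
    replace ((ns x - 2 * t * inner x y + t * t * ns y) * ns y)
      with (ns x * ns y - inner x y * inner x y) in H1 by (unfold t; field; lra).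
    lra.
Qed.

Lemma cauchy_schwarz {n} (x y : vec n) : Rabs (inner x y) <= norm x * norm y.
Proof.
  pose proof (cauchy_schwarz_sq x y). rewrite <- !norm_sq in H.
  pose proof (norm_nonneg x). pose proof (norm_nonneg y).
  assert (Hp : 0 <= norm x * norm y) by nra. set (p := norm x * norm y) in *.
  assert (inner x y * inner x y <= p * p) by (unfold p; nra). clearbody p.
  apply Rabs_le. split; nra.
Qed.

Lemma norm_tri {n} (x y z : vec n) : norm (vsub x z) <= norm (vsub x y) + norm (vsub y z).
Proof.
  pose proof (norm_nonneg (vsub x y)); pose proof (norm_nonneg (vsub y z)).
  pose proof (norm_nonneg (vsub x z)).
  assert (ns (vsub x z) = ns (vsub x y) + 2 * inner (vsub x y) (vsub y z) + ns (vsub y z)).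
  { unfold ns, inner. rewrite <- fsum_scal, <- !fsum_add. apply fsum_ext; intros; unfold vsub; ring. }
  pose proof (cauchy_schwarz (vsub x y) (vsub y z)).
  pose proof (Rle_abs (inner (vsub x y) (vsub y z))).
  rewrite <- !norm_sq in H2. nra.
Qed.

(** ** Sequences and sequential compactness *)

Lemma choice_nat {A : Type} (P : nat -> A -> Prop) :
  (forall k, exists a, P k a) -> exists g : nat -> A, forall k, P k (g k).
Proof.
  intros H. exists (fun k => proj1_sig (constructive_indefinite_description _ (H k))).
  intros k. exact (proj2_sig (constructive_indefinite_description _ (H k))).
Qed.

Lemma inv_succ_pos k : 0 < / (INR k + 1).
Proof. pose proof (pos_INR k). apply Rinv_0_lt_compat. lra. Qed.

Lemma inv_succ_small eps : eps > 0 -> exists N, forall k, (k >= N)%nat -> / (INR k + 1) < eps.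
Proof.
  intros He. destruct (INR_archimed eps 1 He) as [N HN]. exists N. intros k Hk.
  apply le_INR in Hk. pose proof (pos_INR k).
  apply (Rmult_lt_reg_r (INR k + 1)); [lra|]. rewrite Rinv_l by lra. nra.
Qed.

Lemma cv_inv_succ : Un_cv (fun k => / (INR k + 1)) 0.
Proof.
  intros eps He. destruct (inv_succ_small eps He) as [N HN]. exists N. intros k Hk.
  unfold Rdist. rewrite Rminus_0_r, Rabs_pos_eq by apply Rlt_le, inv_succ_pos. auto.
Qed.

Lemma cv_const c : Un_cv (fun _ => c) c.
Proof. intros eps He; exists 0%nat; intros; unfold Rdist; rewrite Rminus_diag, Rabs_R0; lra. Qed.

Lemma cv_squeeze0 (a b : nat -> R) : (forall k, 0 <= a k <= b k) -> Un_cv b 0 -> Un_cv a 0.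
Proof.
  intros Hab Hb eps He. destruct (Hb eps He) as [N HN]. exists N. intros k Hk.
  specialize (HN k Hk). specialize (Hab k). unfold Rdist in *. rewrite Rminus_0_r in *.
  rewrite Rabs_pos_eq by lra. rewrite Rabs_pos_eq in HN by lra. lra.
Qed.

Definition incr (phi : nat -> nat) : Prop := forall k, (phi k < phi (S k))%nat.

Lemma incr_ge phi : incr phi -> forall k, (k <= phi k)%nat.
Proof. intros H; induction k; [lia|]. specialize (H k). lia. Qed.

Lemma incr_comp phi psi : incr phi -> incr psi -> incr (fun k => phi (psi k)).
Proof.
  intros Hp Hq k. assert (Hmono : forall a b, (a < b)%nat -> (phi a < phi b)%nat).
  { intros a b Hab. induction Hab; [apply Hp|]. specialize (Hp m). lia. }
  apply Hmono, Hq.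
Qed.

Lemma cv_subseq phi u l : incr phi -> Un_cv u l -> Un_cv (fun k => u (phi k)) l.
Proof.
  intros Hp H eps He. destruct (H eps He) as [N HN]. exists N. intros k Hk.
  apply HN. pose proof (incr_ge phi Hp k). lia.
Qed.

(** Diagonal index map: the k-th index is the k-th choice beyond the previous one. *)
Fixpoint diag_index (g : nat -> nat -> nat) (k : nat) : nat :=
  match k with O => g O O | S k' => g (S (diag_index g k')) (S k') end.

Lemma bw_R (x : nat -> R) B : (forall k, Rabs (x k) <= B) ->
  exists phi l, incr phi /\ Un_cv (fun k => x (phi k)) l.
Proof.
  intros HB.
  destruct (Bolzano_Weierstrass x (fun c => -B <= c <= B) (compact_P3 (-B) B)) as [l Hl].
  { intros k. specialize (HB k). apply Rabs_le_inv in HB. lra. }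
  assert (Hclust : forall N k, exists p, (N <= p)%nat /\ Rabs (x p - l) < / (INR k + 1)).
  { intros N k. destruct (Hl (disc l (mkposreal _ (inv_succ_pos k))) N) as [p [Hp1 Hp2]].
    - exists (mkposreal _ (inv_succ_pos k)). intros y Hy; exact Hy.
    - exists p; split; auto. }
  destruct (choice_nat (fun N g => forall k, (N <= g k)%nat /\ Rabs (x (g k) - l) < / (INR k + 1)))
    as [g Hg].
  { intros N. apply (choice_nat (fun k p => (N <= p)%nat /\ Rabs (x p - l) < / (INR k + 1))).
    apply Hclust. }
  exists (diag_index g), l. split.
  - intros k. simpl. destruct (Hg (S (diag_index g k)) (S k)). lia.
  - intros eps He. destruct (inv_succ_small eps He) as [N HN]. exists N. intros k Hk.
    unfold Rdist. apply Rlt_trans with (/ (INR k + 1)); auto.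
    destruct k; simpl; apply Hg.
Qed.

Lemma bw_vec n : forall (x : nat -> vec n) (B : vec n), (forall k i, Rabs (x k i) <= B i) ->
  exists phi l, incr phi /\ forall i, Un_cv (fun k => x (phi k) i) (l i).
Proof.
  induction n; intros x B HB.
  - exists (fun k => k), (fun _ => 0). split; [intros k; lia | intros i; inversion i].
  - destruct (IHn (fun k i => x k (Fin.FS i)) (fun i => B (Fin.FS i))) as [phi1 [l1 [Hp1 Hl1]]].
    { intros; apply HB. }
    destruct (bw_R (fun k => x (phi1 k) Fin.F1) (B Fin.F1)) as [phi2 [a [Hp2 Ha]]].
    { intros; apply HB. }
    exists (fun k => phi1 (phi2 k)), (fun i => Fin.caseS' i (fun _ => R) a l1).
    split; [apply incr_comp; auto|].
    intros i. apply (Fin.caseS' i); simpl; [exact Ha|].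
    intros p. apply (cv_subseq phi2 (fun k => x (phi1 k) (Fin.FS p))); auto.
Qed.

Lemma bw_ball n (x : nat -> vec n) (c : vec n) B : (forall k, norm (vsub (x k) c) <= B) ->
  exists phi l, incr phi /\ forall i, Un_cv (fun k => x (phi k) i) (l i).
Proof.
  intros HB. apply (bw_vec n x (fun i => Rabs (c i) + B)). intros k i.
  pose proof (coord_le (vsub (x k) c) i) as Hi. specialize (HB k).
  change (vsub (x k) c i) with (x k i - c i) in Hi.
  pose proof (Rabs_triang (x k i - c i) (c i)).
  replace (x k i - c i + c i) with (x k i) in H by ring. lra.
Qed.

Lemma cv_norm n (x : nat -> vec n) l : (forall i, Un_cv (fun k => x k i) (l i)) ->
  Un_cv (fun k => norm (vsub (x k) l)) 0.
Proof.
  intros H. unfold norm. rewrite <- sqrt_0.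
  apply (continuity_seq sqrt); [apply continuity_pt_sqrt; lra|].
  unfold inner. rewrite <- (fsum_0 n).
  apply (fsum_cv n (fun k i => vsub (x k) l i * vsub (x k) l i) (fun _ => 0)).
  intros i. unfold vsub. replace 0 with ((l i - l i) * (l i - l i)) by ring.
  apply CV_mult; apply CV_minus; auto; apply cv_const.
Qed.

Lemma cv_inner n (a b : nat -> vec n) la lb :
  (forall i, Un_cv (fun k => a k i) (la i)) -> (forall i, Un_cv (fun k => b k i) (lb i)) ->
  Un_cv (fun k => inner (a k) (b k)) (inner la lb).
Proof.
  intros Ha Hb. apply (fsum_cv n (fun k i => a k i * b k i)). intros i. apply CV_mult; auto.
Qed.

Lemma cv_norm_shift n (x : nat -> vec n) l q : Un_cv (fun k => norm (vsub (x k) l)) 0 ->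
  Un_cv (fun k => norm (vsub (x k) q)) (norm (vsub l q)).
Proof.
  intros H eps He. destruct (H eps He) as [N HN]. exists N. intros k Hk.
  specialize (HN k Hk). unfold Rdist in *.
  rewrite Rminus_0_r, Rabs_pos_eq in HN by apply norm_nonneg.
  pose proof (norm_tri (x k) l q). pose proof (norm_tri l (x k) q).
  rewrite (norm_sym l (x k)) in H1. apply Rle_lt_trans with (norm (vsub (x k) l)); auto.
  apply Rabs_le. lra.
Qed.

Lemma closed_ball_limit n (x : nat -> vec n) l c Rad :
  (forall k, norm (vsub (x k) c) <= Rad) -> Un_cv (fun k => norm (vsub (x k) l)) 0 ->
  norm (vsub l c) <= Rad.
Proof.
  intros Hx Hl. apply (Rle_cv_lim (Un := fun k => norm (vsub (x k) c)) (Vn := fun _ => Rad)); [exact Hx| |].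
  - apply cv_norm_shift; auto.
  - apply cv_const.
Qed.

Lemma dist_some n (x : vec n) (A : vec n -> Prop) : (exists a, A a) ->
  exists d, dist_set x A = Some d /\ (forall a, A a -> d <= norm (vsub x a)) /\
    (forall m, (forall a, A a -> m <= norm (vsub x a)) -> m <= d).
Proof.
  intros Hex. unfold dist_set.
  destruct (excluded_middle_informative _) as [H|H]; [|contradiction].
  destruct (completeness _ _ _) as [s [Hub Hlub]]. simpl. exists (-s). split; auto. split.
  - intros a Ha. assert (- norm (vsub x a) <= s) by (apply Hub; eauto). lra.
  - intros m Hm. assert (s <= -m); [|lra].
    apply Hlub. intros r [a [Ha ->]]. specialize (Hm a Ha). lra.
Qed.

Lemma dist_none n (x : vec n) (A : vec n -> Prop) : ~ (exists a, A a) -> dist_set x A = None.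
Proof.
  intros Hex. unfold dist_set.
  destruct (excluded_middle_informative _) as [H|H]; [contradiction | reflexivity].
Qed.

Lemma pnorm_self n (w : pt n) : pnorm (psub w w) = 0.
Proof.
  destruct w as [x r]; unfold pnorm, pinner, psub; simpl.
  replace (inner (vsub x x) (vsub x x) + (r - r) * (r - r)) with (norm (vsub x x) * norm (vsub x x))
    by (rewrite norm_sq; unfold ns; ring).
  rewrite norm_self, Rmult_0_l. apply sqrt_0.
Qed.

Lemma reg_normal_of_quadratic_minorant n (f : vec n -> ereal) u a v C d :
  f u = Some a -> 0 < d -> 0 <= C ->
  (forall y b, norm (vsub y u) < d -> f y = Some b -> a + inner v (vsub y u) - C * ns (vsub y u) <= b) ->
  reg_normal (epi f) (u, a) (v, -1).
Proof.
  intros Hfu Hd HC H. split; [unfold epi; simpl; rewrite Hfu; lra|].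
  intros eps He. exists (Rmin d (eps / (C + 1))). split.
  { apply Rmin_pos; auto. apply Rdiv_lt_0_compat; lra. }
  intros [y r] Hy Hn. unfold epi in Hy; simpl in Hy.
  destruct (f y) as [b|] eqn:Hfy; [|contradiction].
  unfold pnorm, pinner, psub in *; simpl in *. fold (ns (vsub y u)) in *.
  pose proof (ns_nonneg (vsub y u)) as Hns.
  set (P := sqrt (ns (vsub y u) + (r - a) * (r - a))) in *.
  assert (Hsq : 0 <= (r - a) * (r - a)) by apply Rle_0_sqr.
  assert (HP2 : P * P = ns (vsub y u) + (r - a) * (r - a)) by (unfold P; apply sqrt_sqrt; lra).
  assert (HP0 : 0 <= P) by (unfold P; apply sqrt_pos).
  assert (Hnorm : norm (vsub y u) <= P).
  { unfold P, norm. apply sqrt_le_1_alt. fold (ns (vsub y u)). nra. }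
  clearbody P.
  pose proof (Rmin_l d (eps / (C + 1))). pose proof (Rmin_r d (eps / (C + 1))).
  specialize (H y b ltac:(lra) Hfy).
  assert (HPe : P * (C + 1) <= eps).
  { assert (HPl : P <= eps / (C + 1)) by lra. apply (Rmult_le_compat_r (C+1)) in HPl; [|lra].
    unfold Rdiv in HPl. rewrite Rmult_assoc, Rinv_l in HPl by lra. lra. }
  assert (C * (P * P) <= eps * P) by nra.
  assert (C * ns (vsub y u) <= C * (P * P)) by (apply Rmult_le_compat_l; nra). lra.
Qed.

(** Hence v is a (limiting) subgradient, witnessed by constant sequences. *)
Lemma subgradient_of_quadratic_minorant n (f : vec n -> ereal) u a v C d :
  f u = Some a -> 0 < d -> 0 <= C ->
  (forall y b, norm (vsub y u) < d -> f y = Some b -> a + inner v (vsub y u) - C * ns (vsub y u) <= b) ->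
  subdiff f u v.
Proof.
  intros Hfu Hd HC H.
  pose proof (reg_normal_of_quadratic_minorant n f u a v C d Hfu Hd HC H) as Hreg.
  unfold subdiff. rewrite Hfu. split; [apply Hreg|].
  exists (fun _ => (u, a)), (fun _ => (v, -1)).
  rewrite !pnorm_self. split; [apply (fun _ => proj1 Hreg)|].
  split; [apply cv_const|]. split; [apply cv_const|]. intros; exact Hreg.
Qed.

Lemma inf_approx (A : Type) (P : A -> Prop) (g : A -> R) B :
  (exists a, P a) -> (forall a, P a -> B <= g a) ->
  exists m, (forall a, P a -> m <= g a) /\ forall k, exists a, P a /\ g a < m + / (INR k + 1).
Proof.
  intros [a0 Ha0] HB.
  set (T := fun t => exists a, P a /\ t = - g a).
  destruct (completeness T) as [s [Hub Hlub]].
  { exists (-B). intros t [a [Ha ->]]. specialize (HB a Ha). lra. }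
  { exists (- g a0), a0. auto. }
  exists (-s). split.
  - intros a Ha. assert (- g a <= s) by (apply Hub; exists a; auto). lra.
  - intros k. apply NNPP; intros Hn.
    assert (s <= s - / (INR k + 1)); [|pose proof (inv_succ_pos k); lra].
    apply Hlub. intros t [a [Ha ->]].
    assert (~ (g a < - s + / (INR k + 1))) by (intros Hc; apply Hn; exists a; auto). lra.
Qed.

Lemma lsc_seq_limit n (f : vec n -> ereal) (y : nat -> vec n) y0 (b e : nat -> R) c :
  lsc f -> Un_cv (fun k => norm (vsub (y k) y0)) 0 ->
  (forall k, f (y k) = Some (b k)) -> (forall k, b k <= c + e k) -> Un_cv e 0 ->
  exists a, f y0 = Some a /\ a <= c.
Proof.
  intros Hlsc Hy Hb Hbe He. apply NNPP; intros Hn.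
  assert (Heta : exists eta, 0 < eta /\ rlt_e (c + eta) (f y0)).
  { destruct (f y0) as [a|] eqn:E.
    - exists ((a - c) / 2). assert (~ a <= c) by (intros Hc; apply Hn; eauto).
      simpl; split; lra.
    - exists 1. simpl; split; [lra | auto]. }
  destruct Heta as [eta [Heta Hr]].
  destruct (Hlsc y0 _ Hr) as [dl [Hdl Hnear]].
  destruct (Hy dl Hdl) as [N1 HN1]. destruct (He eta Heta) as [N2 HN2].
  specialize (HN1 (Nat.max N1 N2) ltac:(lia)). specialize (HN2 (Nat.max N1 N2) ltac:(lia)).
  unfold Rdist in HN1, HN2. rewrite Rminus_0_r, Rabs_pos_eq in HN1 by apply norm_nonneg.
  rewrite Rminus_0_r in HN2. apply Rlt_le, Rabs_le_inv in HN2.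
  specialize (Hnear _ HN1). rewrite Hb in Hnear. simpl in Hnear.
  specialize (Hbe (Nat.max N1 N2)). lra.
Qed.

Lemma exists_penalized_minimizer n (f : vec n -> ereal) (G : R -> R) (c q p : vec n) (Rad B : R) :
  lsc f -> (forall r, continuity_pt G r) -> (forall r, 0 <= G r) ->
  norm (vsub p c) <= Rad -> f p <> None ->
  (forall y b, norm (vsub y c) <= Rad -> f y = Some b -> B <= b) ->
  exists u a, norm (vsub u c) <= Rad /\ f u = Some a /\
    forall y b, norm (vsub y c) <= Rad -> f y = Some b ->
      a + G (norm (vsub u q)) <= b + G (norm (vsub y q)).
Proof.
  intros Hlsc HG HG0 Hp Hfp HB.
  set (Ball := fun yb : vec n * R => norm (vsub (fst yb) c) <= Rad /\ f (fst yb) = Some (snd yb)).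
  set (val := fun yb : vec n * R => snd yb + G (norm (vsub (fst yb) q))).
  destruct (inf_approx _ Ball val B) as [m [Hm Happrox]].
  { destruct (f p) as [b|] eqn:E; [|contradiction]. exists (p, b). split; auto. }
  { intros [y b] [H1 H2]. unfold val; simpl in *. specialize (HB y b H1 H2).
    specialize (HG0 (norm (vsub y q))). lra. }
  destruct (choice_nat _ Happrox) as [yb Hyb].
  set (y := fun k => fst (yb k)). set (b := fun k => snd (yb k)).
  destruct (bw_ball n y c Rad) as [phi [ys [Hphi Hys]]]; [intros k; apply Hyb|].
  pose proof (cv_norm n (fun k => y (phi k)) ys Hys) as Hcv.
  assert (Hball : norm (vsub ys c) <= Rad).
  { apply (closed_ball_limit n (fun k => y (phi k))); auto. intros k; apply Hyb. }
  set (gs := G (norm (vsub ys q))).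
  assert (Hg : Un_cv (fun k => G (norm (vsub (y (phi k)) q))) gs).
  { apply continuity_seq; [apply HG | apply cv_norm_shift; exact Hcv]. }
  destruct (lsc_seq_limit n f (fun k => y (phi k)) ys (fun k => b (phi k))
              (fun k => / (INR (phi k) + 1) + (gs - G (norm (vsub (y (phi k)) q)))) (m - gs))
    as [a [Ha Ham]]; auto.
  - intros k; apply Hyb.
  - intros k. destruct (Hyb (phi k)) as [_ Hk]. unfold val in Hk. fold (y (phi k)) (b (phi k)) in Hk. lra.
  - replace 0 with (0 + (gs - gs)) by ring.
    apply CV_plus; [apply (cv_subseq phi _ 0 Hphi cv_inv_succ)|].
    apply CV_minus; [apply cv_const | exact Hg].
  - exists ys, a. split; auto. split; auto.
    intros y0 b0 H1 H2. specialize (Hm (y0, b0) (conj H1 H2)). unfold val in Hm; simpl in Hm.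
    fold gs. lra.
Qed.

(** ** Strong metric subregularity as a growth bound on ∂f *)

Definition subdiff_growth {n} (f : vec n -> ereal) (xb : vec n) (kap del : R) : Prop :=
  forall u v, norm (vsub u xb) < del -> subdiff f u v -> norm (vsub u xb) <= kap * norm v.

(** Near xb the zero set of ∂f is {xb}, so the subregularity estimate bounds |u - xb|. *)
Lemma growth_of_sms n (f : vec n -> ereal) xb :
  strong_metric_subregular (subdiff f) xb vzero ->
  exists kap del, 0 < kap /\ 0 < del /\ subdiff_growth f xb kap del.
Proof.
  intros [[H0 [kap [d [Hk [Hd Hreg]]]]] [e [He Hiso]]].
  exists kap, (Rmin d (e/2)). split; auto. split; [apply Rmin_pos; lra|].
  intros u v Hu Hv. pose proof (Rmin_l d (e/2)) as Hud; pose proof (Rmin_r d (e/2)) as Hue.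
  specialize (Hreg u ltac:(lra)).
  destruct (dist_some n u (fun a => subdiff f a vzero) (ex_intro _ xb H0)) as [d1 [E1 [_ Hd1glb]]].
  destruct (dist_some n vzero (subdiff f u) (ex_intro _ v Hv)) as [d2 [E2 [Hd2lb _]]].
  rewrite E1, E2 in Hreg. simpl in Hreg.
  assert (Hd1 : norm (vsub u xb) <= d1).
  { apply Hd1glb. intros a Ha. destruct (Rlt_or_le (norm (vsub a xb)) e) as [Hl|Hl].
    - rewrite (Hiso a Ha Hl). lra.
    - pose proof (norm_tri a u xb) as Htri. rewrite (norm_sym a u) in Htri. lra. }
  specialize (Hd2lb v Hv). rewrite norm_vzero_sub in Hd2lb.
  assert (kap * d2 <= kap * norm v) by (apply Rmult_le_compat_l; lra). lra.
Qed.

Lemma sms_of_growth n (f : vec n -> ereal) xb kap del :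
  subdiff f xb vzero -> 0 < kap -> 0 < del -> subdiff_growth f xb kap del ->
  strong_metric_subregular (subdiff f) xb vzero.
Proof.
  intros H0 Hkap Hdel Hgr. split.
  - split; auto. exists kap, del. split; auto. split; auto. intros x Hx.
    destruct (classic (exists v, subdiff f x v)) as [Hex|Hex].
    + destruct (dist_some n x (fun u => subdiff f u vzero) (ex_intro _ xb H0)) as [d1 [E1 [H1 _]]].
      destruct (dist_some n vzero (subdiff f x) Hex) as [d2 [E2 [_ H2]]].
      rewrite E1, E2. simpl. specialize (H1 xb H0).
      assert (Hd2 : norm (vsub x xb) / kap <= d2).
      { apply H2. intros v Hv. rewrite norm_vzero_sub. specialize (Hgr x v Hx Hv).
        apply (Rmult_le_reg_l kap); auto. unfold Rdiv.
        rewrite <- Rmult_assoc, (Rmult_comm kap), Rmult_assoc, Rinv_r by lra. lra. }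
      apply (Rmult_le_compat_l kap) in Hd2; [|lra].
      replace (kap * (norm (vsub x xb) / kap)) with (norm (vsub x xb)) in Hd2 by (field; lra). lra.
    + rewrite (dist_none n vzero (subdiff f x) Hex). simpl.
      destruct (dist_set x (fun u => subdiff f u vzero)); simpl; auto.
  - exists del. split; auto. intros x Hx Hlt.
    specialize (Hgr x vzero Hlt Hx). rewrite norm_vzero in Hgr.
    apply norm_zero_eq. pose proof (norm_nonneg (vsub x xb)). lra.
Qed.

(** ** (ii) => (i) *)

Lemma proximal_point_subgradient n (f : vec n -> ereal) xb x u a c Rad :
  0 < c -> f u = Some a -> norm (vsub u xb) < Rad ->
  (forall y b, norm (vsub y xb) <= Rad -> f y = Some b ->
     a + c / 2 * (norm (vsub u x) * norm (vsub u x)) <= b + c / 2 * (norm (vsub y x) * norm (vsub y x))) ->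
  subdiff f u (vscale c (vsub x u)).
Proof.
  intros Hc Hfu Hu Hmin.
  apply (subgradient_of_quadratic_minorant n f u a _ (c/2) (Rad - norm (vsub u xb))); auto; try lra.
  intros y b Hy Hfy. pose proof (norm_tri y u xb).
  specialize (Hmin y b ltac:(lra) Hfy).
  rewrite inner_scal_l, inner_sub_swap.
  pose proof (ns_three n y x u) as Hexp. rewrite <- !norm_sq in Hexp. rewrite <- norm_sq. nra.
Qed.

(** If f(x) - f(xb) < c/32 |x - xb|^2 with c = 1/κ, the proximal point u
    of f around x lies within |x - xb|/4 of x, yet the growth bound applied to its
    subgradient c (x - u) forces |u - xb| <= |u - x|. *)
Lemma strong_local_min_of_sms n (f : vec n -> ereal) xb : lsc f -> dom f xb ->
  local_minimizer f xb -> strong_metric_subregular (subdiff f) xb vzero ->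
  strong_local_minimizer f xb.
Proof.
  intros Hlsc Hdom [d0 [Hd0 Hlm]] Hsms.
  unfold dom in Hdom. destruct (f xb) as [fb|] eqn:Hfb; [|contradiction].
  destruct (growth_of_sms n f xb Hsms) as [kap [r [Hk [Hr Hgr]]]].
  set (c := / kap). assert (Hc : 0 < c) by (apply Rinv_0_lt_compat; auto).
  set (R0 := Rmin d0 r / 2).
  assert (HR0 : 0 < R0 /\ R0 <= d0 /\ R0 < r).
  { unfold R0. pose proof (Rmin_pos d0 r Hd0 Hr). pose proof (Rmin_l d0 r).
    pose proof (Rmin_r d0 r). lra. }
  exists (c / 16), (R0 / 2). split; [lra|]. split; [lra|].
  intros x Hx. rewrite Hfb. destruct (f x) as [b|] eqn:Hfx; auto.
  set (rho := norm (vsub x xb)) in *.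
  apply Rnot_lt_ge. intros Hlt.
  assert (Hlm_ball : forall y b', norm (vsub y xb) <= R0 -> f y = Some b' -> fb <= b').
  { intros y b' Hy Hfy. specialize (Hlm y ltac:(lra)). rewrite Hfy in Hlm. exact Hlm. }
  assert (HxR0 : rho <= R0) by lra.
  assert (Hrho : 0 < rho).
  { destruct (Rle_lt_or_eq_dec 0 rho (norm_nonneg _)) as [H|H]; auto.
    rewrite <- H in Hlt. pose proof (Hlm_ball x b HxR0 Hfx). simpl in Hlt. lra. }
  destruct (exists_penalized_minimizer n f (fun r => c / 2 * (r * r)) xb x x R0 fb Hlsc)
    as [u [a [Hu [Hfu Hmin]]]]; auto; try lra.
  { intros; reg. }
  { intros r0. pose proof (Rle_0_sqr r0). unfold Rsqr in *. nra. }
  { congruence. }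
  pose proof (Hlm_ball u a Hu Hfu) as Hfba.
  pose proof (Hmin x b HxR0 Hfx) as Hx1. rewrite norm_self in Hx1.
  set (nux := norm (vsub u x)) in *.
  assert (Hnux : nux < rho / 4).
  { assert (0 <= nux) by apply norm_nonneg.
    assert (c * (nux * nux) < c * (rho * rho / 16)) by nra.
    apply Rmult_lt_reg_l in H0; auto. nra. }
  assert (Hu_int : norm (vsub u xb) < R0).
  { pose proof (norm_tri u x xb) as Ht. fold rho nux in Ht. lra. }
  (* the growth bound at u with the subgradient c (x - u) gives |u - xb| <= |u - x| *)
  assert (Hv : subdiff f u (vscale c (vsub x u))).
  { apply (proximal_point_subgradient n f xb x u a c R0); auto. }
  specialize (Hgr u _ ltac:(lra) Hv).
  rewrite norm_scal_pos, (norm_sym x u) in Hgr by lra. fold nux in Hgr.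
  replace (kap * (c * nux)) with nux in Hgr by (unfold c; field; lra).
  pose proof (norm_tri x u xb). rewrite (norm_sym x u) in H. fold nux rho in H. lra.
Qed.

Lemma unit_limit_nonzero n (w : nat -> vec n) wl :
  (forall k, norm (w k) = 1) -> (forall i, Un_cv (fun k => w k i) (wl i)) -> wl <> vzero.
Proof.
  intros Hw1 Hwl Heq.
  assert (Hc : Un_cv (fun k => ns (w k)) (ns wl)) by (apply cv_inner; auto).
  assert (Hc1 : Un_cv (fun k => ns (w k)) 1).
  { replace (fun k => ns (w k)) with (fun _ : nat => 1); [apply cv_const|].
    apply functional_extensionality; intros k. rewrite <- norm_sq, Hw1. ring. }
  pose proof (UL_sequence _ _ _ Hc Hc1) as H1. rewrite Heq, <- norm_sq, norm_vzero in H1. lra.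
Qed.

(** If u_k -> xb with v_k ∈ F(u_k) and |v_k| = O(|u_k - xb|), then rescaling by
    t_k = |u_k - xb| gives, along a subsequence, a pair (w, z) of the graphical
    derivative DF(xb|0) with w a unit direction, and <z, w> is the limit of the
    normalized products <v_k, u_k - xb> / |u_k - xb|^2. *)
Lemma graph_deriv_of_normalized_seq n (F : svmap n) xb (u v : nat -> vec n) L :
  (forall k, F (u k) (v k)) -> (forall k, u k <> xb) ->
  Un_cv (fun k => norm (vsub (u k) xb)) 0 ->
  (forall k, norm (v k) <= L * norm (vsub (u k) xb)) ->
  exists phi w z, incr phi /\ graph_deriv F xb vzero w z /\ w <> vzero /\
    Un_cv (fun k => inner (v (phi k)) (vsub (u (phi k)) xb) / ns (vsub (u (phi k)) xb)) (inner z w).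
Proof.
  intros HF Hne Hcv HL.
  set (t := fun k => norm (vsub (u k) xb)).
  assert (Ht : forall k, 0 < t k).
  { intros k. destruct (Rle_lt_or_eq_dec 0 _ (norm_nonneg (vsub (u k) xb))) as [H|H]; auto.
    exfalso. apply (Hne k), norm_zero_eq. auto. }
  set (w := fun k => vscale (/ t k) (vsub (u k) xb)).
  set (z := fun k => vscale (/ t k) (v k)).
  assert (Hw1 : forall k, norm (w k) = 1).
  { intros k. unfold w. rewrite norm_scal_pos by (apply Rlt_le, Rinv_0_lt_compat, Ht).
    fold (t k). specialize (Ht k). field. lra. }
  assert (Hz : forall k, norm (z k) <= L).
  { intros k. unfold z. rewrite norm_scal_pos by (apply Rlt_le, Rinv_0_lt_compat, Ht).
    specialize (HL k). fold (t k) in HL. specialize (Ht k).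
    apply (Rmult_le_compat_l (/ t k)) in HL; [|apply Rlt_le, Rinv_0_lt_compat; auto].
    replace (/ t k * (L * t k)) with L in HL by (field; lra). lra. }
  destruct (bw_vec n w (fun _ => 1)) as [phi1 [wl [Hp1 Hwl0]]].
  { intros k i. rewrite <- (Hw1 k). apply coord_le. }
  destruct (bw_vec n (fun k => z (phi1 k)) (fun _ => L)) as [phi2 [zl [Hp2 Hzl]]].
  { intros k i. eapply Rle_trans; [apply coord_le | apply Hz]. }
  set (phi := fun k => phi1 (phi2 k)).
  assert (Hphi : incr phi) by (unfold phi; apply incr_comp; auto).
  assert (Hwl : forall i, Un_cv (fun k => w (phi k) i) (wl i)).
  { intros i. apply (cv_subseq phi2 (fun k => w (phi1 k) i)); auto. }
  exists phi, wl, zl. split; [exact Hphi|]. split; [|split].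
  - exists (fun k => t (phi k)), (fun k => w (phi k)), (fun k => z (phi k)).
    split; [intros; apply Ht|]. split; [apply (cv_subseq phi t 0 Hphi Hcv)|].
    split; [apply cv_norm; auto|]. split; [apply cv_norm; auto|].
    intros k. specialize (Ht (phi k)).
    replace (vadd xb (vscale (t (phi k)) (w (phi k)))) with (u (phi k)).
    + replace (vadd vzero (vscale (t (phi k)) (z (phi k)))) with (v (phi k)); [apply HF|].
      apply functional_extensionality; intros i. unfold z, vadd, vzero, vscale. field. lra.
    + apply functional_extensionality; intros i. unfold w, vadd, vscale, vsub. field. lra.
  - apply (unit_limit_nonzero n (fun k => w (phi k))); auto.
  - replace (fun k => inner (v (phi k)) (vsub (u (phi k)) xb) / ns (vsub (u (phi k)) xb))
      with (fun k => inner (z (phi k)) (w (phi k))); [apply cv_inner; auto|].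
    apply functional_extensionality; intros k. specialize (Ht (phi k)).
    unfold z, w. rewrite inner_scal_l, inner_comm, inner_scal_l, inner_comm, <- norm_sq.
    fold (t (phi k)). field. lra.
Qed.

Definition pos_part (s : R) : R := (s + Rabs s) / 2.

Lemma pos_part_nonneg s : 0 <= pos_part s.
Proof. unfold pos_part, Rabs; destruct (Rcase_abs s); lra. Qed.

Lemma pos_part_of_nonpos s : s <= 0 -> pos_part s = 0.
Proof. unfold pos_part, Rabs; destruct (Rcase_abs s); intros; lra. Qed.

Lemma pos_part_of_nonneg s : 0 <= s -> pos_part s = s.
Proof. unfold pos_part, Rabs; destruct (Rcase_abs s); intros; lra. Qed.

Lemma pos_part_le s x : s <= x -> 0 <= x -> pos_part s <= x.
Proof. unfold pos_part, Rabs; destruct (Rcase_abs s); intros; lra. Qed.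

(** The square of the positive part is a function with Lipschitz derivative:
    a second-order upper expansion with curvature 1. *)
Lemma pos_part_sq_expansion s D :
  pos_part (s + D) * pos_part (s + D) <= pos_part s * pos_part s + 2 * pos_part s * D + D * D.
Proof.
  destruct (Rle_or_lt (s + D) 0) as [H1|H1].
  - rewrite (pos_part_of_nonpos (s + D)) by lra. pose proof (pos_part_nonneg s).
    replace (pos_part s * pos_part s + 2 * pos_part s * D + D * D)
      with ((pos_part s + D) * (pos_part s + D)) by ring.
    pose proof (Rle_0_sqr (pos_part s + D)). unfold Rsqr in *. lra.
  - rewrite (pos_part_of_nonneg (s + D)) by lra.
    destruct (Rle_or_lt 0 s) as [H2|H2].
    + rewrite (pos_part_of_nonneg s) by lra. lra.
    + rewrite (pos_part_of_nonpos s) by lra. nra.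
Qed.

(** penalty rad r = ((r^2 - rad^2)_+)^2 / (4 rad^2): zero on [0, rad], C^1 in r. *)
Definition penalty (rad r : R) : R :=
  pos_part (r * r - rad * rad) * pos_part (r * r - rad * rad) * / (4 * (rad * rad)).

Section Penalty.
Variable rad : R.
Hypothesis Hrad : 0 < rad.

Let inv4 : 0 < / (4 * (rad * rad)).
Proof. apply Rinv_0_lt_compat. nra. Qed.

Lemma penalty_nonneg r : 0 <= penalty rad r.
Proof.
  unfold penalty. pose proof (pos_part_nonneg (r * r - rad * rad)).
  apply Rmult_le_pos; [nra | lra].
Qed.

Lemma penalty_continuous r : continuity_pt (penalty rad) r.
Proof. unfold penalty, pos_part. reg. Qed.

Lemma penalty_zero r : 0 <= r <= rad -> penalty rad r = 0.
Proof. intros Hr. unfold penalty. rewrite pos_part_of_nonpos by nra. ring. Qed.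

Lemma penalty_ge A r : 0 <= A -> (2 * A + 1) * rad <= r -> A * A * (r * r) <= penalty rad r.
Proof.
  intros HA Hr. assert (Hr1 : rad <= r) by nra. unfold penalty. rewrite pos_part_of_nonneg by nra.
  (* r^2 - rad^2 = (r - rad)(r + rad) >= 2 A rad r *)
  assert (Hs : 2 * A * rad * r <= r * r - rad * rad) by nra.
  assert (Hsq : 4 * (A * A) * (rad * rad) * (r * r) <= (r * r - rad * rad) * (r * r - rad * rad)).
  { replace (4 * (A * A) * (rad * rad) * (r * r)) with ((2 * A * rad * r) * (2 * A * rad * r)) by ring.
    assert (0 <= 2 * A * rad * r) by (repeat apply Rmult_le_pos; lra). apply Rmult_le_compat; lra. }
  apply (Rmult_le_compat_r (/ (4 * (rad * rad)))) in Hsq; [|lra].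
  replace (4 * (A * A) * (rad * rad) * (r * r) * / (4 * (rad * rad))) with (A * A * (r * r)) in Hsq
    by (field; lra).
  exact Hsq.
Qed.

(** Second-order upper expansion of penalty(|y - xb|) around a point u, written in
    terms of r = |u - xb|, ry = |y - xb|, nh = |y - u| <= 1 and ip = <u - xb, y - u>. *)
Lemma penalty_expansion r ry nh ip :
  0 <= r -> 0 <= nh <= 1 -> ry * ry = r * r + 2 * ip + nh * nh -> - (r * nh) <= ip <= r * nh ->
  penalty rad ry <= penalty rad r + pos_part (r * r - rad * rad) / (rad * rad) * ip
    + (2 * pos_part (r * r - rad * rad) + (2 * r + 1) * (2 * r + 1)) / (4 * (rad * rad)) * (nh * nh).
Proof.
  intros Hr Hnh Hry Hip. unfold penalty.
  set (s := r * r - rad * rad). set (D := 2 * ip + nh * nh).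
  set (iR := / (4 * (rad * rad))).
  replace (ry * ry - rad * rad) with (s + D) by (unfold s, D; lra).
  replace (pos_part s / (rad * rad)) with (4 * iR * pos_part s) by (unfold iR; field; lra).
  replace ((2 * pos_part s + (2 * r + 1) * (2 * r + 1)) / (4 * (rad * rad)))
    with (iR * (2 * pos_part s + (2 * r + 1) * (2 * r + 1))) by (unfold iR; field; lra).
  pose proof (pos_part_sq_expansion s D) as Hexp. pose proof (pos_part_nonneg s).
  (* |D| <= (2r + 1) nh since nh <= 1 *)
  assert (HD2 : D * D <= (2 * r + 1) * (2 * r + 1) * (nh * nh)).
  { assert (nh * nh <= nh) by nra.
    assert (- ((2 * r + 1) * nh) <= D <= (2 * r + 1) * nh) by (unfold D; nra). nra. }
  fold iR in inv4.
  apply (Rmult_le_compat_r iR) in Hexp; [|lra].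
  apply (Rmult_le_compat_l iR) in HD2; [|lra].
  unfold D in *. nra.
Qed.

End Penalty.

(** ** (iii) => (ii) *)

Lemma quadratic_minorant_of_prox n (f : vec n -> ereal) xb fb :
  f xb = Some fb -> prox_subdiff f xb vzero ->
  exists M d, 0 <= M /\ 0 < d /\
    forall y b, norm (vsub y xb) < d -> f y = Some b -> fb - M * ns (vsub y xb) <= b.
Proof.
  intros Hfb Hprox. unfold prox_subdiff in Hprox. rewrite Hfb in Hprox.
  destruct Hprox as [M0 [d [Hd Hprox]]].
  exists (Rabs M0), d. split; [apply Rabs_pos|]. split; [exact Hd|].
  pose proof (Rle_abs (- M0)) as HM0. rewrite Rabs_Ropp in HM0.
  intros y b Hy Hfy. pose proof (ns_nonneg (vsub y xb)).
  destruct (Rle_lt_or_eq_dec 0 _ (norm_nonneg (vsub y xb))) as [Hp|Hp].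
  - specialize (Hprox y (conj Hp Hy)). rewrite Hfy, inner_vzero_l in Hprox.
    rewrite <- norm_sq. set (t := norm (vsub y xb)) in *.
    assert (Ht2 : 0 < t ^ 2) by (apply pow_lt; auto).
    apply (Rmult_le_compat_r (t ^ 2)) in Hprox; [|lra].
    replace ((b - fb - 0) / t ^ 2 * t ^ 2) with (b - fb) in Hprox by (field; lra).
    simpl in *. nra.
  - symmetry in Hp. apply norm_zero_eq in Hp. subst y. rewrite Hfb in Hfy. inversion Hfy. pose proof (Rabs_pos M0). nra.
Qed.

(** A minimizer u of f + penalty(|· - xb|) over a ball, interior to the ball, has the
    subgradient l (xb - u) with l = (|u - xb|^2 - rad^2)_+ / rad^2: the penalty is
    C^1 with Lipschitz gradient, so it yields a quadratic minorant of f at u. *)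
Lemma penalized_minimizer_subgradient n (f : vec n -> ereal) xb u a rad Rad :
  0 < rad -> f u = Some a -> norm (vsub u xb) < Rad ->
  (forall y b, norm (vsub y xb) <= Rad -> f y = Some b ->
     a + penalty rad (norm (vsub u xb)) <= b + penalty rad (norm (vsub y xb))) ->
  subdiff f u (vscale (pos_part (norm (vsub u xb) * norm (vsub u xb) - rad * rad) / (rad * rad))
                      (vsub xb u)).
Proof.
  intros Hrad Hfu Hu Hmin.
  set (r := norm (vsub u xb)) in *.
  assert (Er : r = norm (vsub u xb)) by reflexivity. clearbody r.
  assert (Hr0 : 0 <= r) by (rewrite Er; apply norm_nonneg).
  pose proof (pos_part_nonneg (r * r - rad * rad)).
  apply (subgradient_of_quadratic_minorant n f u a _
           ((2 * pos_part (r * r - rad * rad) + (2 * r + 1) * (2 * r + 1)) / (4 * (rad * rad)))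
           (Rmin 1 (Rad - r))).
  { exact Hfu. } { apply Rmin_pos; lra. }
  { apply Rmult_le_pos; [nra | apply Rlt_le, Rinv_0_lt_compat; nra]. }
  intros y b Hy Hfy.
  pose proof (Rmin_l 1 (Rad - r)). pose proof (Rmin_r 1 (Rad - r)).
  pose proof (norm_tri y u xb).
  specialize (Hmin y b ltac:(lra) Hfy).
  pose proof (ns_three n y xb u) as H3. rewrite <- !norm_sq, <- Er in H3.
  pose proof (cauchy_schwarz (vsub u xb) (vsub y u)) as Hcs. rewrite <- Er in Hcs.
  apply Rabs_le_inv in Hcs.
  pose proof (penalty_expansion rad Hrad r (norm (vsub y xb)) (norm (vsub y u))
                (inner (vsub u xb) (vsub y u)) Hr0 ltac:(split; [apply norm_nonneg | lra]) H3 Hcs).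
  rewrite inner_scal_l, inner_sub_swap, <- norm_sq. lra.
Qed.

Lemma descent_step n (f : vec n -> ereal) xb fb M d :
  lsc f -> f xb = Some fb -> 0 <= M -> 0 < d ->
  (forall y b, norm (vsub y xb) < d -> f y = Some b -> fb - M * ns (vsub y xb) <= b) ->
  forall rad, 0 < rad -> (2 * (M + 1) + 2) * rad < d ->
  forall p b, norm (vsub p xb) <= rad -> f p = Some b -> b < fb ->
  exists u l, u <> xb /\ norm (vsub u xb) <= (2 * (M + 1) + 1) * rad /\
    0 <= l <= (2 * (M + 1) + 2) * (2 * (M + 1) + 2) /\ subdiff f u (vscale l (vsub xb u)).
Proof.
  intros Hlsc Hfb HM Hd LB rad Hrad HKd p b Hp Hfp Hb.
  set (K := 2 * (M + 1) + 2) in *.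
  assert (EK : K = 2 * (M + 1) + 2) by reflexivity. clearbody K.
  destruct (exists_penalized_minimizer n f (penalty rad) xb xb p (K * rad)
              (fb - M * ((K * rad) * (K * rad))) Hlsc) as [u [a [Hu [Hfu Hmin]]]].
  { apply penalty_continuous. } { apply penalty_nonneg; auto. }
  { nra. } { congruence. }
  { intros y b' Hy Hfy. specialize (LB y b' ltac:(lra) Hfy). rewrite <- norm_sq in LB.
    pose proof (norm_nonneg (vsub y xb)).
    assert (norm (vsub y xb) * norm (vsub y xb) <= (K * rad) * (K * rad)) by nra. nra. }
  set (r := norm (vsub u xb)) in *.
  assert (Er : r = norm (vsub u xb)) by reflexivity. clearbody r.
  assert (Hr0 : 0 <= r) by (rewrite Er; apply norm_nonneg).
  assert (HQM : penalty rad r < M * (r * r)).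
  { specialize (LB u a ltac:(nra) Hfu). rewrite <- norm_sq, <- Er in LB.
    specialize (Hmin p b ltac:(nra) Hfp).
    rewrite (penalty_zero rad (norm (vsub p xb))) in Hmin; [lra|].
    split; [apply norm_nonneg | exact Hp]. }
  assert (Hune : u <> xb).
  { intros Heq. assert (r = 0) by (rewrite Er, Heq; apply norm_self).
    rewrite H, penalty_zero in HQM; lra. }
  (* since the penalty dominates (M+1)^2 r^2 beyond (2(M+1)+1) rad, u stays inside *)
  assert (Hrb : r < (2 * (M + 1) + 1) * rad).
  { apply Rnot_le_lt; intros Hc.
    pose proof (penalty_ge rad Hrad (M + 1) r ltac:(lra) Hc). nra. }
  exists u, (pos_part (r * r - rad * rad) / (rad * rad)).
  split; [exact Hune|]. split; [lra|]. split.
  { pose proof (pos_part_nonneg (r * r - rad * rad)).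
    assert (Hpr : pos_part (r * r - rad * rad) <= r * r) by (apply pos_part_le; nra).
    assert (Hr2 : r * r <= (K - 1) * rad * ((K - 1) * rad)) by nra.
    split; [apply Rmult_le_pos; [lra | apply Rlt_le, Rinv_0_lt_compat; nra]|].
    apply (Rmult_le_reg_r (rad * rad)); [nra|].
    unfold Rdiv. rewrite Rmult_assoc, Rinv_l by nra. nra. }
  rewrite Er in Hmin |- *.
  apply (penalized_minimizer_subgradient n f xb u a rad (K * rad)); auto.
  rewrite <- Er. nra.
Qed.

Section SecondOrderSufficiency.
Variable n : nat.
Variable f : vec n -> ereal.
Variable xb : vec n.
Hypothesis PD : forall w z, graph_deriv_dom (subdiff f) xb vzero w -> w <> vzero ->
  graph_deriv (subdiff f) xb vzero w z -> inner z w > 0.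

Lemma no_flat_sequence (u v : nat -> vec n) (eps : nat -> R) L :
  (forall k, subdiff f (u k) (v k)) -> (forall k, u k <> xb) ->
  Un_cv (fun k => norm (vsub (u k) xb)) 0 ->
  (forall k, norm (v k) <= L * norm (vsub (u k) xb)) ->
  (forall k, inner (v k) (vsub (u k) xb) <= eps k * ns (vsub (u k) xb)) ->
  Un_cv eps 0 -> False.
Proof.
  intros Hsub Hne Hcv HL Hin Heps.
  destruct (graph_deriv_of_normalized_seq n (subdiff f) xb u v L Hsub Hne Hcv HL)
    as [phi [w [z [Hphi [Hgd [Hw Hlim]]]]]].
  assert (Hle : inner z w <= 0).
  { apply (Rle_cv_lim (Un := fun k => inner (v (phi k)) (vsub (u (phi k)) xb) / ns (vsub (u (phi k)) xb))
                      (Vn := fun k => eps (phi k))); [|exact Hlim | apply cv_subseq; auto].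
    intros k. specialize (Hin (phi k)).
    assert (Hpos : 0 < ns (vsub (u (phi k)) xb)).
    { rewrite <- norm_sq. pose proof (norm_nonneg (vsub (u (phi k)) xb)).
      assert (norm (vsub (u (phi k)) xb) <> 0) by (intros H0; apply (Hne (phi k)), norm_zero_eq, H0).
      nra. }
    apply (Rmult_le_reg_r (ns (vsub (u (phi k)) xb))); auto.
    unfold Rdiv. rewrite Rmult_assoc, Rinv_l by lra. lra. }
  specialize (PD w z (ex_intro _ z Hgd) Hw Hgd). lra.
Qed.

Lemma growth_of_positive_graph_deriv :
  exists kap del, 0 < kap /\ 0 < del /\ subdiff_growth f xb kap del.
Proof.
  apply NNPP; intros Hn.
  assert (Hk : forall k, exists uv : vec n * vec n, norm (vsub (fst uv) xb) < / (INR k + 1) /\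
     subdiff f (fst uv) (snd uv) /\ (INR k + 1) * norm (snd uv) < norm (vsub (fst uv) xb)).
  { intros k. apply NNPP; intros Hk. apply Hn. exists (INR k + 1), (/ (INR k + 1)).
    pose proof (pos_INR k). split; [lra|]. split; [apply inv_succ_pos|].
    intros u v Hu Hv. apply Rnot_lt_le; intros Hc. apply Hk. exists (u, v). simpl. auto. }
  destruct (choice_nat _ Hk) as [uv Huv].
  apply (no_flat_sequence (fun k => fst (uv k)) (fun k => snd (uv k)) (fun k => / (INR k + 1)) 1).
  - intros k; apply Huv.
  - intros k Heq. destruct (Huv k) as [_ [_ H3]]. rewrite Heq, norm_self in H3.
    pose proof (pos_INR k). pose proof (norm_nonneg (snd (uv k))). nra.
  - apply (cv_squeeze0 _ (fun k => / (INR k + 1))); [|exact cv_inv_succ].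
    intros k. split; [apply norm_nonneg | apply Rlt_le, Huv].
  - intros k. destruct (Huv k) as [_ [_ H3]]. pose proof (pos_INR k).
    pose proof (norm_nonneg (snd (uv k))). nra.
  - intros k. destruct (Huv k) as [_ [_ H3]]. pose proof (pos_INR k).
    pose proof (cauchy_schwarz (snd (uv k)) (vsub (fst (uv k)) xb)) as Hcs.
    pose proof (Rle_abs (inner (snd (uv k)) (vsub (fst (uv k)) xb))).
    rewrite <- norm_sq.
    set (T := norm (vsub (fst (uv k)) xb)) in *. set (V := norm (snd (uv k))) in *.
    assert (0 <= V) by apply norm_nonneg. assert (0 <= T) by apply norm_nonneg.
    assert (V <= / (INR k + 1) * T).
    { apply (Rmult_le_reg_l (INR k + 1)); [lra|]. rewrite <- Rmult_assoc, Rinv_r by lra. lra. }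
    nra.
  - exact cv_inv_succ.
Qed.

(** With the quadratic minorant, xb is a local minimizer: otherwise descent steps
    from points p_k -> xb with f(p_k) < f(xb) would form a flat sequence. *)
Lemma local_min_of_positive_graph_deriv fb M d :
  lsc f -> f xb = Some fb -> 0 <= M -> 0 < d ->
  (forall y b, norm (vsub y xb) < d -> f y = Some b -> fb - M * ns (vsub y xb) <= b) ->
  local_minimizer f xb.
Proof.
  intros Hlsc Hfb HM Hd LB. apply NNPP; intros Hn.
  set (K := 2 * (M + 1) + 2).
  set (R0 := d / (2 * K)).
  assert (HR0 : 0 < R0) by (unfold R0, K; apply Rdiv_lt_0_compat; lra).
  assert (HKR0 : K * R0 < d) by (unfold R0, K; field_simplify; lra).
  assert (Hk : forall k, exists ul : vec n * R, fst ul <> xb /\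
     norm (vsub (fst ul) xb) <= (K - 1) * (R0 * / (INR k + 1)) /\
     0 <= snd ul <= K * K /\ subdiff f (fst ul) (vscale (snd ul) (vsub xb (fst ul)))).
  { intros k. pose proof (inv_succ_pos k).
    assert (HRk : 0 < R0 * / (INR k + 1)) by nra.
    assert (HRk2 : R0 * / (INR k + 1) <= R0).
    { assert (/ (INR k + 1) <= 1); [|nra].
      rewrite <- Rinv_1. pose proof (pos_INR k). apply Rinv_le_contravar; lra. }
    assert (Hex : exists p b, norm (vsub p xb) <= R0 * / (INR k + 1) /\ f p = Some b /\ b < fb).
    { apply NNPP; intros Hc. apply Hn. exists (R0 * / (INR k + 1)). split; auto.
      intros x Hx. rewrite Hfb. destruct (f x) as [b|] eqn:Hfx; simpl; auto.
      apply Rnot_lt_le; intros Hb. apply Hc; eauto. }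
    destruct Hex as [p [b [Hp [Hfp Hb]]]].
    destruct (descent_step n f xb fb M d Hlsc Hfb HM Hd LB (R0 * / (INR k + 1)) HRk
                ltac:(fold K; nra) p b Hp Hfp Hb) as [u [l [H1 [H2 [H3 H4]]]]].
    exists (u, l). simpl. fold K in H2, H3. replace (K - 1) with (2 * (M + 1) + 1) by (unfold K; ring).
    auto. }
  destruct (choice_nat _ Hk) as [ul Hul].
  apply (no_flat_sequence (fun k => fst (ul k))
           (fun k => vscale (snd (ul k)) (vsub xb (fst (ul k)))) (fun _ => 0) (K * K)).
  - intros k; apply Hul.
  - intros k; apply Hul.
  - apply (cv_squeeze0 _ (fun k => (K - 1) * R0 * / (INR k + 1))).
    + intros k. split; [apply norm_nonneg|]. rewrite Rmult_assoc. apply Hul.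
    + replace 0 with ((K - 1) * R0 * 0) by ring. apply CV_mult; [apply cv_const | apply cv_inv_succ].
  - intros k. destruct (Hul k) as [_ [_ [H3 _]]].
    rewrite norm_scal_pos, norm_sym by lra. apply Rmult_le_compat_r; [apply norm_nonneg | lra].
  - intros k. destruct (Hul k) as [_ [_ [H3 _]]].
    rewrite inner_scal_l, inner_sub_swap. fold (ns (vsub (fst (ul k)) xb)).
    pose proof (ns_nonneg (vsub (fst (ul k)) xb)). nra.
  - apply cv_const.
Qed.

Lemma local_min_and_sms_of_second_order : lsc f -> dom f xb -> prox_subdiff f xb vzero ->
  local_minimizer f xb /\ strong_metric_subregular (subdiff f) xb vzero.
Proof.
  intros Hlsc Hdom Hprox. unfold dom in Hdom.
  destruct (f xb) as [fb|] eqn:Hfb; [|contradiction].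
  destruct (quadratic_minorant_of_prox n f xb fb Hfb Hprox) as [M [d [HM [Hd LB]]]].
  assert (H0 : subdiff f xb vzero).
  { apply (subgradient_of_quadratic_minorant n f xb fb vzero M d); auto.
    intros y b Hy Hfy. rewrite inner_vzero_l. specialize (LB y b Hy Hfy). lra. }
  destruct growth_of_positive_graph_deriv as [kap [del [Hkap [Hdel Hgr]]]].
  split.
  - apply (local_min_of_positive_graph_deriv fb M d); auto.
  - apply (sms_of_growth n f xb kap del); auto.
Qed.

End SecondOrderSufficiency.

Theorem theorem3p3 (n : nat) (f : vec n -> ereal) (xb : vec n)
  (Hproper : proper f) (Hlsc : lsc f) (Hdom : dom f xb) :
  ( (prox_subdiff f xb vzero /\
      forall w z, graph_deriv_dom (subdiff f) xb vzero w -> w <> vzero ->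
        graph_deriv (subdiff f) xb vzero w z -> inner z w > 0)
    -> (local_minimizer f xb /\ strong_metric_subregular (subdiff f) xb vzero) )
  /\
  ( (local_minimizer f xb /\ strong_metric_subregular (subdiff f) xb vzero)
    -> strong_local_minimizer f xb ).
Proof.
  split.
  - intros [Hprox PD]. apply local_min_and_sms_of_second_order; auto.
  - intros [Hlm Hsms]. apply strong_local_min_of_sms; auto.
Qed.
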